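(* There is a constant $A$ such that, for all sufficiently large $n$, every big irreducible representation $\lambda$ of $S_n$ and every $\pi\in S_n$ containing a cycle of length at least $8\sqrt{n}\log n$ obey $\left|\chi_\lambda(\pi)/d_\lambda\right| \le A^{t(\pi)} n^{-t(\pi)/2}$.
   Context: An irreducible representation $\lambda$ of $S_n$ with character $\chi_\lambda$ and dimension $d_\lambda$ is big if $d_\lambda > e^{-\sqrt{n}\log n}\sqrt{n!}$ (natural logarithm). For $\pi\in S_n$, $t(\pi)$ is the minimum number of transpositions whose product is $\pi$. *)

From HB Require Import structures.
From mathcomp Require Import all_boot all_order all_algebra all_fingroup all_field all_character.
From mathcomp Require Import all_classical all_reals all_analysis.
Set Implicit Arguments. Unset Strict Implicit. Unset Printing Implicit Defensive.
Import Order.TTheory GRing.Theory Num.Theory.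
Local Open Scope ring_scope.
Local Open Scope classical_set_scope.

(* Transfer of a real algebraic number x : algC to a real number in R:
   the supremum of the rationals q with q <= x (Dedekind cut). *)
Definition algCtoR (R : realType) (x : algC) : R :=
  sup [set (ratr q : R) | q in [set q : rat | (ratr q : algC) <= x]].

Definition prod_of_ntrans (n : nat) (s : 'S_n) (k : nat) : bool :=
  [exists ts : k.-tuple ('I_n * 'I_n),
     all (@perm.dpair _) ts && (s == \prod_(p <- ts) tperm p.1 p.2)%g].

Lemma prod_of_ntrans_ex (n : nat) (s : 'S_n) : exists k, prod_of_ntrans s k.
Proof.
case: (prod_tpermP s) => ts -> Hd.
exists (size ts); apply/existsP; exists (in_tuple ts).
by rewrite /= Hd eqxx.
Qed.

Definition tmin (n : nat) (s : 'S_n) : nat := ex_minn (prod_of_ntrans_ex s).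

Definition big_irr (R : realType) (n : nat) (i : Iirr [set: 'S_n]%G) : Prop :=
  algCtoR R ('chi_i 1%g) >
    expR (- (Num.sqrt (n%:R : R) * ln (n%:R : R))) * Num.sqrt ((n`!)%:R : R).

Definition has_long_cycle (R : realType) (n : nat) (s : 'S_n) : Prop :=
  exists x : 'I_n,
    8 * Num.sqrt (n%:R : R) * ln (n%:R : R) <= (#|porbit s x|%:R : R).

From HB Require Import structures.
From mathcomp Require Import all_boot all_order all_algebra all_fingroup all_field all_character.
From mathcomp Require Import all_classical all_reals all_analysis.
From mathcomp Require Import ring lra zify.
Import Order.TTheory GRing.Theory Num.Theory.
Set Implicit Arguments. Unset Strict Implicit. Unset Printing Implicit Defensive.

(* Let pi have f fixed points, m moved points and k nontrivial cycles, and put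
   t = m - k = n - #cycles.  Then t(pi) <= t and 2k <= m; a cycle of length L
   forces L <= t + 1, so a long cycle gives sqrt n log n <= t.  By the second
   orthogonality relation |chi(pi)|^2 <= |C(pi)| <= f! m^k, while bigness gives
   d^2 > e^(-2t) n!.  As n!/f! >= (n/e)^m, we get
   |chi(pi)/d|^2 <= e^(m + 2t) n^(-t) <= (e^4/n)^t, so A = e^2 works once
   n > e^4. *)

Section PermCycles.
Variables (T : finType) (s : {perm T}).

Definition perm_fix := [set x | s x == x].
Definition perm_supp := [set x | s x != x].
Definition porbit_rep x := odflt x [pick y in porbit s x].
Definition porbit_reps := [set x in perm_supp | porbit_rep x == x].

Lemma porbit_rep_in x : porbit_rep x \in porbit s x.
Proof. by rewrite /porbit_rep; case: pickP => [y //|/(_ x)]; rewrite porbit_id. Qed.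

Lemma porbit_rep_porbit x : porbit s (porbit_rep x) = porbit s x.
Proof. by apply/eqP; rewrite eq_porbit_mem porbit_rep_in. Qed.

Lemma eq_porbit_rep x y : porbit s x = porbit s y -> porbit_rep x = porbit_rep y.
Proof.
by move=> Exy; rewrite /porbit_rep Exy; case: pickP => // /(_ y); rewrite porbit_id.
Qed.

Lemma porbit_repK x : porbit_rep (porbit_rep x) = porbit_rep x.
Proof. exact/eq_porbit_rep/porbit_rep_porbit. Qed.

Lemma perm_fix_porbit x y : x \in perm_fix -> y \in porbit s x -> y = x.
Proof. by rewrite inE => /eqP sx /porbitP[i ->]; rewrite permX_fix. Qed.

Lemma perm_supp_porbit x y : x \in perm_supp -> y \in porbit s x -> y \in perm_supp.
Proof.
rewrite !inE => sx /porbitP[i ->]; apply: contra sx => /eqP sy.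
apply/eqP/(@perm_inj _ (s ^+ i)).
by rewrite -permM -expgS expgSr permM.
Qed.

Lemma porbit_rep_reps x : x \in perm_supp -> porbit_rep x \in porbit_reps.
Proof.
by move=> sx; rewrite inE porbit_repK eqxx andbT (perm_supp_porbit sx (porbit_rep_in x)).
Qed.

Lemma perm_suppE : perm_supp = ~: perm_fix.
Proof. by apply/setP => x; rewrite !inE. Qed.

Lemma card_perm_fix_supp : #|perm_fix| + #|perm_supp| = #|T|.
Proof. by rewrite perm_suppE cardsC. Qed.

Lemma card_porbits_reps : #|porbits s| = #|perm_fix| + #|porbit_reps|.
Proof.
have disj : perm_fix :&: porbit_reps = finset.set0.
  by apply/setP => x; rewrite !inE; case: eqP.
have -> : porbits s = porbit s @: (perm_fix :|: porbit_reps).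
  apply/setP => O; apply/imsetP/imsetP => [[x _ ->]|[x _ ->]]; last by exists x.
  have [sx | sx] := eqVneq (s x) x; first by exists x; rewrite // !inE sx eqxx.
  exists (porbit_rep x); last by rewrite porbit_rep_porbit.
  by rewrite inE porbit_rep_reps ?orbT ?inE.
rewrite card_in_imset; first by rewrite -cardsUI disj cards0 addn0.
move=> x y.
have fixP a b : a \in perm_fix -> porbit s a = porbit s b -> a = b.
  by move=> fa Eab; apply/esym/(perm_fix_porbit fa); rewrite Eab porbit_id.
rewrite !finset.in_setU => /orP[fx|/setIdP[_ /eqP <-]] /orP[fy|/setIdP[_ /eqP <-]] Exy.
- exact: fixP.
- exact: fixP.
- exact/esym/fixP.
- by rewrite !porbit_rep_porbit in Exy; apply: eq_porbit_rep.
Qed.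

(* [s] injects the representatives into the moved points that are not
   representatives. *)
Lemma card_porbit_reps : 2 * #|porbit_reps| <= #|perm_supp|.
Proof.
have reps_supp : porbit_reps \subset perm_supp.
  by apply/fintype.subsetP => x; rewrite inE => /andP[].
have sub : s @: porbit_reps \subset perm_supp :\: porbit_reps.
  apply/fintype.subsetP => _ /imsetP[r /setIdP[sr /eqP rr] ->].
  have srr : s r \in porbit s r by rewrite -{1}[s]expg1 mem_porbit.
  rewrite finset.in_setD (perm_supp_porbit sr srr) andbT.
  apply/negP => /setIdP[_ /eqP Esr].
  have Erep : porbit_rep (s r) = r.
    by rewrite -{2}rr; apply/eq_porbit_rep/eqP; rewrite eq_porbit_mem.
  by move: sr; rewrite inE -{1}Esr Erep eqxx.
move: (subset_leq_card sub) (subset_leq_card reps_supp).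
by rewrite card_imset ?cardsD ?(finset.setIidPr reps_supp); [lia | exact: perm_inj].
Qed.

Lemma card_porbits_porbit x : #|porbits s| + #|porbit s x| <= #|T| + 1.
Proof.
have sub : porbits s :\ porbit s x \subset porbit s @: (~: porbit s x).
  apply/fintype.subsetP => O /setD1P[nOx /imsetP[y _ EO]]; apply/imsetP.
  by exists y; rewrite // inE -eq_porbit_mem -EO.
have := leq_trans (subset_leq_card sub) (leq_imset_card _ _).
by rewrite (cardsD1 (porbit s x) (porbits s)) imset_f // -(cardsC (porbit s x)); lia.
Qed.

Lemma cent1_permX g i x : g \in 'C[s]%g -> (s ^+ i)%g (g x) = g ((s ^+ i)%g x).
Proof. by move=> /cent1P sg; rewrite -!permM -commuteX. Qed.

Lemma cent1_perm_fix g : g \in 'C[s]%g -> g \in 'N(perm_fix | 'P)%g.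
Proof.
move=> sg; apply/astabsP => x /=; rewrite !inE -{1}[s]expg1 cent1_permX // expg1.
by rewrite (inj_eq perm_inj).
Qed.

(* A permutation commuting with [s] is determined by its restriction to the
   fixed points and by its values at the orbit representatives. *)
Lemma card_cent1_perm :
  #|'C[s]%g| <= (#|perm_fix|)`! * #|perm_supp| ^ #|porbit_reps|.
Proof.
pose Psi g := (restr_perm perm_fix g,
               [ffun x => if x \in porbit_reps then Some (g x) else None]).
have Psi_inj : {in 'C[s]%g &, injective Psi}.
  move=> g h sg sh [Efix Ereps]; apply/permP => x.
  have [fx | sx] := boolP (x \in perm_fix).
    by rewrite -(restr_permE (cent1_perm_fix sg) fx) Efix restr_permE ?cent1_perm_fix.
  rewrite -finset.in_setC -perm_suppE in sx.
  have := porbit_rep_in x; rewrite porbit_sym => /porbitP[i ->].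
  rewrite -!cent1_permX //; congr ((s ^+ i)%g _).
  have := congr1 (fun f : {ffun T -> option T} => f (porbit_rep x)) Ereps.
  by rewrite /= !ffunE porbit_rep_reps // => -[].
have PsiC : Psi @: 'C[s]%g \subset finset.setX [set p in perm_on perm_fix]
                               [set f in pffun_on None porbit_reps (Some @: perm_supp)].
  apply/fintype.subsetP => _ /imsetP[g sg ->].
  rewrite finset.in_setX !finset.in_set; apply/andP; split; first exact: restr_perm_on.
  apply/pffun_onP; split=> [|_ /fintype.imageP[x rx ->]].
    by apply/fintype.subsetP => x; rewrite inE ffunE; case: ifP.
  rewrite ffunE rx imset_f // inE -{1}[s]expg1 cent1_permX // expg1 (inj_eq perm_inj).
  by move: rx; rewrite !inE => /andP[].
rewrite -[#|'C[s]%g|](card_in_imset Psi_inj); apply: leq_trans (subset_leq_card PsiC) _.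
rewrite cardsX (cardsE (perm_on _)) (cardsE (pffun_on _ _ _)) card_perm card_pffun_on.
by rewrite card_imset //; exact: Some_inj.
Qed.

Lemma porbits_supp_reps : #|T| - #|porbits s| = #|perm_supp| - #|porbit_reps|.
Proof. by rewrite card_porbits_reps -card_perm_fix_supp subnDl. Qed.

Lemma card_porbits_le x : #|porbit s x| <= (#|perm_supp| - #|porbit_reps|).+1.
Proof. by have := card_porbits_porbit x; rewrite -porbits_supp_reps; lia. Qed.

End PermCycles.

Lemma card_porbits1 (T : finType) : #|porbits (1 : {perm T})| = #|T|.
Proof.
rewrite card_imset // => x y Exy.
by apply/esym/(perm_fix_porbit (s := 1)); rewrite ?inE ?perm1 // Exy porbit_id.
Qed.

(* The induction of prod_tpermP, with porbits_mul_tperm counting the cycles. *)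
Lemma prod_tperm_porbits (T : finType) (s : {perm T}) : exists ts : seq (T * T),
  [/\ all perm.dpair ts, s = (\prod_(t <- ts) tperm t.1 t.2)%g
     & size ts + #|porbits s| = #|T|].
Proof.
have [n] := ubnP #|perm_supp s|; elim: n s => // n IHn s /ltnSE-le_s_n.
have [s1 | [x sx]] := set_0Vmem (perm_supp s).
  have -> : s = 1%g.
    apply/permP => x; apply/eqP; move: (finset.in_set0 x).
    by rewrite -s1 !inE perm1 => /negbFE.
  by exists [::]; rewrite big_nil card_porbits1.
have xy : x != (s^-1)%g x.
  by apply/eqP => Ex; move: sx; rewrite !inE {1}Ex permKV eqxx.
have [|ts [dts Es Ets]] := IHn (tperm x ((s^-1)%g x) * s)%g.
  rewrite (cardsD1 x) sx in le_s_n; apply: leq_trans le_s_n; rewrite ltnS.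
  apply/subset_leq_card/fintype.subsetP => z.
  rewrite !inE permM permE /= -(canF_eq (permK _)).
  have [-> | zx] := eqVneq z x; first by rewrite permKV eqxx.
  by case: (s z =P x) => // -> _; rewrite eq_sym.
exists ((x, (s^-1)%g x) :: ts); split; first by rewrite /= xy.
  by rewrite big_cons -Es mulgA tperm2 mul1g.
have := mem_porbit s 1 ((s^-1)%g x); rewrite expg1 permKV => x_orb.
have := porbits_mul_tperm s x ((s^-1)%g x); rewrite x_orb xy /= double0 addn0.
by move=> E; rewrite -Ets E addn1 addnS.
Qed.

Lemma tmin_le (n : nat) (s : 'S_n) : tmin s <= #|perm_supp s| - #|porbit_reps s|.
Proof.
have [ts [dts Es Ets]] := prod_tperm_porbits s.
rewrite -porbits_supp_reps -Ets addnK /tmin; case: ex_minnP => t _ min_t.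
by apply: min_t; apply/existsP; exists (in_tuple ts); rewrite /= dts -Es eqxx.
Qed.

Local Open Scope ring_scope.

Lemma irr_sqr_norm_le_cent1 (gT : finGroupType) (G : {group gT}) (i : Iirr G) g :
  g \in G -> `|'chi_i g| ^+ 2 <= #|'C_G[g]%g|%:R.
Proof.
move=> Gg; have := second_orthogonality_relation g Gg; rewrite class_refl mulr1n.
move=> <-; rewrite normCK (bigD1 i) //= lerDl.
by apply: sumr_ge0 => j _; exact: mul_conjC_ge0.
Qed.

Lemma irr_sqr_norm_le_perm (T : finType) (i : Iirr [set: {perm T}]%G) s :
  `|'chi_i s| ^+ 2 <= ((#|perm_fix s|)`! * #|perm_supp s| ^ #|porbit_reps s|)%:R.
Proof.
apply: le_trans (irr_sqr_norm_le_cent1 i (finset.in_setT s)) _.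
by rewrite ler_nat (leq_trans _ (card_cent1_perm s)) ?subset_leq_card ?subsetIr.
Qed.

Section RealBounds.
Variable R : realType.
Local Notation e := (expR (1 : R)).

Lemma expR1_ge1 : 1 <= e.
Proof. by rewrite -expR0 ler_expR. Qed.

Lemma exp2_div_sqrt_le1 (x : R) : e ^+ 4 <= x -> e ^+ 2 / Num.sqrt x <= 1.
Proof.
move=> ex; have x0 : 0 < x := lt_le_trans (exprn_gt0 4 (expR_gt0 1)) ex.
rewrite ler_pdivrMr ?sqrtr_gt0 // mul1r.
by rewrite -(ger0_norm (exprn_ge0 2 (expR_ge0 1))) -sqrtr_sqr -exprM ler_sqrt ?(ltW x0).
Qed.

Lemma natr_succ_exp_le (n m : nat) : (m <= n)%N -> (n.+1%:R : R) ^+ m <= e * n%:R ^+ m.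
Proof.
case: n => [|n]; first by rewrite leqn0 => /eqP->; rewrite !expr0 mulr1 expR1_ge1.
move=> mn; set N : R := n.+1%:R; have N0 : 0 < N by rewrite ltr0n.
have -> : (n.+2%:R : R) = (1 + N^-1) * N by rewrite mulrDl mul1r mulVf ?gt_eqF // -natr1 addrC.
rewrite exprMn ler_pM2r ?exprn_gt0 //.
apply: (@le_trans _ _ (expR (N^-1) ^+ m)).
  by rewrite lerXn2r ?nnegrE ?expR_ge0 ?expR_ge1Dx // addr_ge0 ?invr_ge0 ?ltW.
by rewrite -expRM_natl ler_expR ler_pdivrMr // mul1r ler_nat.
Qed.

Lemma fact_mul_exp_le (f m : nat) :
  (f`!%:R : R) * (f + m)%:R ^+ m <= e ^+ m * (f + m)`!%:R.
Proof.
elim: m => [|m IH]; first by rewrite addn0 !expr0 mul1r mulr1.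
rewrite addnS factS natrM; set N := ((f + m).+1%:R : R).
have -> : f`!%:R * N ^+ m.+1 = N * (f`!%:R * N ^+ m) by rewrite exprS; ring.
have -> : e ^+ m.+1 * (N * (f + m)`!%:R) = N * (e * (e ^+ m * (f + m)`!%:R)).
  by rewrite exprS; ring.
apply: ler_wpM2l; first exact: ler0n.
apply: le_trans (ler_wpM2l (expR_ge0 1) IH).
rewrite mulrCA; apply: ler_wpM2l; first exact: ler0n.
exact: natr_succ_exp_le (leq_addl f m).
Qed.

Lemma le_div_sqrt_exp (a N q : R) (t : nat) : 0 <= q -> 0 <= a -> 0 < N ->
  q ^+ 2 * N ^+ t <= a ^+ (2 * t) -> q <= (a / Num.sqrt N) ^+ t.
Proof.
move=> q0 a0 N0 qN; rewrite -(@ler_pXn2r _ 2) ?nnegrE ?exprn_ge0 ?divr_ge0 ?sqrtr_ge0 //.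
rewrite -exprM mulnC exprM expr_div_n (sqr_sqrtr (ltW N0)) expr_div_n -exprM.
by rewrite ler_pdivlMr ?exprn_gt0.
Qed.

Lemma fact_le_expR_sqr (w S d : R) (t : nat) : 0 <= w -> S <= t%:R ->
  expR (- S) * Num.sqrt w < d -> w <= e ^+ (2 * t) * d ^+ 2.
Proof.
move=> w0 St wd.
have lhs0 : 0 <= expR (- S) * Num.sqrt w by rewrite mulr_ge0 ?expR_ge0 ?sqrtr_ge0.
have le_wd : expR (2%:R * - S) * w <= d ^+ 2.
  rewrite expRM_natl -[w](sqr_sqrtr w0) -exprMn.
  by rewrite lerXn2r ?nnegrE ?(ltW wd) // (le_trans lhs0 (ltW wd)).
have -> : w = expR (2%:R * S) * (expR (2%:R * - S) * w).
  by rewrite mulrA -expRD mulrN subrr expR0 mul1r.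
rewrite -expRM_natl mulr1; apply: ler_pM; rewrite ?expR_ge0 ?mulr_ge0 //.
by rewrite ler_expR natrM ler_pM2l ?ltr0n.
Qed.

Lemma ratio_le_of_big_dim (n f m k : nat) (S d q : R) : (0 < n)%N ->
  (f + m)%N = n -> (2 * k <= m)%N -> S <= (m - k)%:R ->
  expR (- S) * Num.sqrt n`!%:R < d -> 0 <= q ->
  (q * d) ^+ 2 <= (f`! * m ^ k)%:R ->
  q <= (e ^+ 2 / Num.sqrt n%:R) ^+ (m - k).
Proof.
move=> n0 fm km St big_d q0 qd; set t := (m - k)%N in St *.
have n_gt0 : (0 : R) < n%:R by rewrite ltr0n.
have w_gt0 : (0 : R) < n`!%:R by rewrite ltr0n fact_gt0.
have [e0 n_ge0] : 0 <= e /\ (0 : R) <= n%:R by rewrite expR_ge0 ler0n.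
apply: le_div_sqrt_exp; rewrite ?exprn_ge0 //; rewrite -(ler_pM2r w_gt0).
have fact_le := fact_le_expR_sqr (ltW w_gt0) St big_d.
have qw : q ^+ 2 * n`!%:R <= e ^+ (2 * t) * (f`!%:R * n%:R ^+ k).
  apply: le_trans (ler_wpM2l (exprn_ge0 2 q0) fact_le) _.
  rewrite mulrCA -exprMn; apply: ler_wpM2l; first exact: exprn_ge0.
  apply: le_trans qd _; rewrite natrM natrX; apply: ler_wpM2l; first exact: ler0n.
  by rewrite lerXn2r ?nnegrE ?ler0n // ler_nat -fm leq_addl.
have fact_exp : f`!%:R * n%:R ^+ m <= e ^+ m * n`!%:R.
  by rewrite -fm fact_mul_exp_le.
have -> : q ^+ 2 * n%:R ^+ t * n`!%:R = n%:R ^+ t * (q ^+ 2 * n`!%:R) by ring.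
apply: le_trans (ler_wpM2l (exprn_ge0 t n_ge0) qw) _.
have -> : (n%:R : R) ^+ t * (e ^+ (2 * t) * (f`!%:R * n%:R ^+ k)) =
          e ^+ (2 * t) * (f`!%:R * n%:R ^+ m).
  by rewrite (_ : m = k + t)%N /t ?exprD; [ring | lia].
have -> : (e ^+ 2) ^+ (2 * t) * n`!%:R = e ^+ (2 * t) * (e ^+ (2 * t) * n`!%:R).
  by rewrite -exprM mulrA -exprD; congr (_ ^+ _ * _); lia.
apply: ler_wpM2l; first exact: exprn_ge0.
apply: le_trans fact_exp _; apply: ler_wpM2r; first exact: ler0n.
by rewrite ler_weXn2l ?expR1_ge1 //; lia.
Qed.

End RealBounds.

Section AlgCtoR.
Variable R : realType.

Lemma algCtoR_le (x : algC) (B : R) : 0 <= x -> 0 <= B ->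
  (forall q : rat, 0 <= q -> ratr q <= x -> ratr q <= B) -> algCtoR R x <= B.
Proof.
move=> x0 B0 xB; apply: ge_sup; first by exists 0, 0; rewrite /= ?rmorph0.
move=> _ [q qx <-]; have [q0 | q0] := leP 0 q; first exact: xB.
by apply: le_trans B0; rewrite lerq0 ltW.
Qed.

Lemma algCtoR_nat (d : nat) : algCtoR R d%:R = d%:R.
Proof.
have ub (q : rat) : (ratr q : algC) <= d%:R -> (ratr q : R) <= d%:R.
  by rewrite -(ratr_nat algC d) -(ratr_nat R d) !ler_rat.
apply/le_anti/andP; split; first by apply: algCtoR_le; rewrite ?ler0n // => q _; apply: ub.
apply: ub_le_sup; first by exists d%:R => _ [q qd <-]; apply: ub.
by exists d%:R; rewrite /= ratr_nat.
Qed.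

Lemma algCtoR_le_sqr (x : algC) (d N : nat) (B : R) : 0 <= x -> 0 <= B ->
  (x * d%:R) ^+ 2 <= N%:R ->
  (forall q : R, 0 <= q -> (q * d%:R) ^+ 2 <= N%:R -> q <= B) -> algCtoR R x <= B.
Proof.
move=> x0 B0 xN qB; apply: algCtoR_le => // q q0 qx; apply: qB; first by rewrite ler0q.
have ratr_sqr (F : numFieldType) : ((ratr q : F) * d%:R) ^+ 2 = ratr ((q * d%:R) ^+ 2).
  by rewrite rmorphXn rmorphM rmorph_nat.
rewrite ratr_sqr -(ratr_nat R N) ler_rat -(ler_rat algC) -ratr_sqr ratr_nat.
apply: le_trans xN; rewrite lerXn2r ?nnegrE ?(mulr_ge0 _ (ler0n _ _)) ?ler0q //.
exact: ler_wpM2r.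
Qed.

End AlgCtoR.

Lemma long_cycle_le (R : realType) (n : nat) (s : 'S_n) :
  expR 1 <= n%:R :> R -> has_long_cycle R s ->
  Num.sqrt (n%:R : R) * ln (n%:R : R) <= (#|perm_supp s| - #|porbit_reps s|)%:R.
Proof.
move=> en [x long_x]; have n1 : 1 <= n%:R :> R := le_trans (expR1_ge1 R) en.
have S1 : 1 <= Num.sqrt (n%:R : R) * ln (n%:R : R).
  apply: mulr_ege1; first by rewrite -[X in X <= _]sqrtr1 ler_sqrt ?ler0n.
  by rewrite -[X in X <= _](expRK 1) ler_ln ?posrE ?expR_gt0 ?(lt_le_trans ltr01 n1).
have : (#|porbit s x|%:R : R) <= (#|perm_supp s| - #|porbit_reps s|)%:R + 1.
  by rewrite natr1 ler_nat card_porbits_le.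
by move: long_x; rewrite -mulrA; lra.
Qed.

Theorem lemma8 (R : realType) :
  exists A : R, exists N : nat, forall n : nat, (N <= n)%N ->
    forall (i : Iirr [set: 'S_n]%G) (s : 'S_n),
      @big_irr R _ i -> @has_long_cycle R _ s ->
      @algCtoR R `|'chi_i s / 'chi_i 1%g| <=
        A ^+ tmin s * (Num.sqrt (n%:R : R)) ^- tmin s.
Proof.
pose E := expR (1 : R); have E1 : 1 <= E := expR1_ge1 R.
exists (E ^+ 2), (Num.truncn (E ^+ 4)).+1 => n n_large i s big_i long_s.
have E4n : E ^+ 4 <= n%:R.
  by apply/ltW/(lt_le_trans (truncnS_gt _)); rewrite ler_nat.
have En : E <= n%:R by apply: le_trans E4n; rewrite -{1}[E]expr1 ler_eXnr.
have n0 : (0 < n)%N by rewrite -(ltr_nat R) (lt_le_trans _ En) ?(lt_le_trans ltr01).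
have ratio0 : 0 <= E ^+ 2 / Num.sqrt (n%:R : R).
  by rewrite divr_ge0 ?exprn_ge0 ?expR_ge0 ?sqrtr_ge0.
rewrite -exprVn -exprMn.
apply: le_trans (ler_wiXn2l ratio0 (exp2_div_sqrt_le1 E4n) (tmin_le s)).
have [d chi1] : exists d, 'chi_i 1%g = d%:R by apply/natrP; exact: Cnat_irr1.
have d0 : (0 < d)%N by rewrite -(ltr_nat algC) -chi1 irr1_gt0.
rewrite /big_irr chi1 algCtoR_nat in big_i; rewrite chi1.
have fm := card_perm_fix_supp s; rewrite card_ord in fm.
apply: (algCtoR_le_sqr (d := d) (normr_ge0 _) (exprn_ge0 _ ratio0)).
  rewrite normf_div normr_nat divfK ?pnatr_eq0 -?lt0n //.
  exact: irr_sqr_norm_le_perm.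
move=> q q0 qd; apply: ratio_le_of_big_dim n0 fm (card_porbit_reps s) _ big_i q0 qd.
exact: long_cycle_le.
Qed.
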